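(* Let $f$ be a periodic traveling wave of speed $c$ ($c^2\neq1$). If $|\operatorname{Re}\lambda|$ is sufficiently large, then $\operatorname{sgn}(G_p(\lambda))=\operatorname{sgn}(\gamma)$; i.e. $G_p(\lambda)>0$ for superluminal waves and $G_p(\lambda)<0$ for subluminal waves.
   Context: A traveling wave of speed $c$ ($c^2\neq1$) is a real solution $f$ of $(c^2-1)f''+\sin f=0$, with energy $E$ given by $\tfrac12(c^2-1)(f')^2+1-\cos f=E$; it is subluminal if $c^2<1$, superluminal if $c^2>1$; periodic traveling waves are librational ($0<E<2$) or rotational ($E<0$ if $c^2<1$, $E>2$ if $c^2>1$), with fundamental period $T$ (smallest $T>0$ with $f(z+T)=f(z)\pmod{2\pi}$). Let $\gamma=1/(c^2-1)$. Equation (P): $p''-2c\gamma\lambda p'+\gamma(\lambda^2+\cos f(z))p=0$, written as a first-order system for $(p,p')$ with fundamental matrix $F(z;\lambda)$, $F(0;\lambda)=I$; its Floquet multipliers $\rho_\pm(\lambda)$ are the eigenvalues of $F(T;\lambda)$. Define $G_p(\lambda)=\log|\rho_+(\lambda)|\log|\rho_-(\lambda)|$. *)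

From Stdlib Require Import Reals.
From Coquelicot Require Import Coquelicot.
Open Scope R_scope.

Definition gam (c : R) : R := / (c ^ 2 - 1).

Definition traveling_wave (c : R) (f : R -> R) : Prop :=
  exists f1 f2 : R -> R, forall z : R,
    is_derive f z (f1 z) /\ is_derive f1 z (f2 z) /\
    (c ^ 2 - 1) * f2 z + sin (f z) = 0.

Definition period_mod2pi (f : R -> R) (T : R) : Prop :=
  forall z : R, exists k : Z, f (z + T) = f z + 2 * PI * IZR k.

Definition fundamental_period (f : R -> R) (T : R) : Prop :=
  0 < T /\ period_mod2pi f T /\
  (forall T' : R, 0 < T' < T -> ~ period_mod2pi f T').

Definition periodic_tw (c : R) (f : R -> R) (T : R) : Prop :=
  traveling_wave c f /\ fundamental_period f T.

(* Coefficient matrix of equation (P) as a first-order system for (p, p'):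
   (p, p')' = A(z) (p, p'),
   A = [[0, 1], [-gamma (lambda^2 + cos f), 2 c gamma lambda]]. Indices 0,1. *)
Definition Acoef (c : R) (f : R -> R) (lam : C) (z : R) (i k : nat) : C :=
  match i, k with
  | 0%nat, 0%nat => RtoC 0
  | 0%nat, 1%nat => RtoC 1
  | 1%nat, 0%nat => Copp (Cmult (RtoC (gam c)) (Cplus (Cmult lam lam) (RtoC (cos (f z)))))
  | 1%nat, 1%nat => Cmult (RtoC (2 * c * gam c)) lam
  | _, _ => RtoC 0
  end.

Definition fundamental_matrix (c : R) (f : R -> R) (lam : C)
    (F : R -> nat -> nat -> C) : Prop :=
  (forall i j : nat, (i < 2)%nat -> (j < 2)%nat ->
     F 0 i j = if Nat.eqb i j then RtoC 1 else RtoC 0) /\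
  (forall (z : R) (i j : nat), (i < 2)%nat -> (j < 2)%nat ->
     is_derive (fun s => F s i j) z
       (Cplus (Cmult (Acoef c f lam z i 0) (F z 0%nat j))
              (Cmult (Acoef c f lam z i 1) (F z 1%nat j)))).

Definition eigenvalues2 (M : nat -> nat -> C) (r1 r2 : C) : Prop :=
  forall x : C,
    Cmult (Cminus x r1) (Cminus x r2) =
    Cminus (Cmult (Cminus x (M 0%nat 0%nat)) (Cminus x (M 1%nat 1%nat)))
           (Cmult (M 0%nat 1%nat) (M 1%nat 0%nat)).

Definition Gp (r1 r2 : C) : R := ln (Cmod r1) * ln (Cmod r2).

Definition sgn (x : R) : R :=
  if Rlt_dec 0 x then 1 else if Rlt_dec x 0 then -1 else 0.

From Stdlib Require Import Reals Lra Lia.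
From Coquelicot Require Import Coquelicot.
Open Scope R_scope.

(* For large |Re lam| the constant-coefficient part of (P) has the characteristic roots
   m1, m2 = lam gam (c +- 1), whose real parts are of order |Re lam| and separated by the gap
   2 |gam| |Re lam|, while the remaining coefficient gam cos f stays bounded.  In the coordinates
   p' - m2 p and p' - m1 p the system is diagonal up to a coupling of size |gam| / gap, so a
   Gronwall energy estimate and Duhamel's formula make the trace of the monodromy matrix close to
   e^{m1 T}, while Liouville's formula gives its determinant e^{(m1 + m2) T} exactly.  Hence
   log |rho_+-| lie within 1 of Re m1 T and Re m2 T, both of modulus larger than 1, and
   Re m1 Re m2 = gam (Re lam)^2 has the sign of gam. *)

(** * Complex-valued functions of a real variable *)

Lemma is_derive_Re (f : R -> C) (x : R) (l : C) :
  is_derive f x l -> is_derive (fun s => Re (f s)) x (Re l).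
Proof.
  intros H. unfold is_derive in *.
  eapply filterdiff_ext_lin.
  - apply (filterdiff_comp f fst _ fst H).
    apply filterdiff_linear, is_linear_fst.
  - intros y. destruct l. reflexivity.
Qed.

Lemma is_derive_Im (f : R -> C) (x : R) (l : C) :
  is_derive f x l -> is_derive (fun s => Im (f s)) x (Im l).
Proof.
  intros H. unfold is_derive in *.
  eapply filterdiff_ext_lin.
  - apply (filterdiff_comp f snd _ snd H).
    apply filterdiff_linear, is_linear_snd.
  - intros y. destruct l. reflexivity.
Qed.

Lemma is_derive_Re_Im (f : R -> C) (x : R) (l : C) :
  is_derive (fun s => Re (f s)) x (Re l) ->
  is_derive (fun s => Im (f s)) x (Im l) -> is_derive f x l.
Proof.
  intros H1 H2. unfold is_derive in *.
  assert (H3 : filterdiff (fun y : R => (Re (f y), Im (f y)) : C) (locally x)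
                 (fun y : R => (scal y (Re l), scal y (Im l)) : C)).
  { apply (filterdiff_comp_2 _ _ (fun u v => (u, v) : C) _ _
             (fun u v => (u, v) : C) H1 H2).
    apply filterdiff_linear.
    eapply is_linear_ext; [|apply is_linear_id]. intros [a b]; reflexivity. }
  eapply filterdiff_ext_lin.
  - eapply (filterdiff_ext _ f); [|exact H3].
    intros y. unfold Re, Im. destruct (f y); reflexivity.
  - intros y. destruct l; reflexivity.
Qed.

Lemma is_derive_Cmult (f g : R -> C) (x : R) (a b : C) :
  is_derive f x a -> is_derive g x b ->
  is_derive (fun s => f s * g s)%C x (a * g x + f x * b)%C.
Proof.
  intros Hf Hg.
  assert (Hrr := Derive.is_derive_mult _ _ x _ _ (is_derive_Re f x a Hf) (is_derive_Re g x b Hg)).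
  assert (Hii := Derive.is_derive_mult _ _ x _ _ (is_derive_Im f x a Hf) (is_derive_Im g x b Hg)).
  assert (Hri := Derive.is_derive_mult _ _ x _ _ (is_derive_Re f x a Hf) (is_derive_Im g x b Hg)).
  assert (Hir := Derive.is_derive_mult _ _ x _ _ (is_derive_Im f x a Hf) (is_derive_Re g x b Hg)).
  apply is_derive_Re_Im.
  - assert (H := is_derive_minus _ _ x _ _ Hrr Hii).
    replace (Re _) with (minus (Re a * Re (g x) + Re (f x) * Re b)
                               (Im a * Im (g x) + Im (f x) * Im b))
      by (unfold minus, plus, opp, Re, Im; simpl; ring).
    exact H.
  - assert (H := is_derive_plus _ _ x _ _ Hri Hir).
    replace (Im _) with (plus (Re a * Im (g x) + Re (f x) * Im b)
                              (Im a * Re (g x) + Im (f x) * Re b))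
      by (unfold plus, Re, Im; simpl; ring).
    exact H.
Qed.

Lemma is_derive_Cscal (k : C) (f : R -> C) (x : R) (a : C) :
  is_derive f x a -> is_derive (fun s => k * f s)%C x (k * a)%C.
Proof.
  intros H.
  assert (Hk := is_derive_Cmult (fun _ => k) f x 0 a
                  (@is_derive_const R_AbsRing C_R_NormedModule k x) H).
  replace (k * a)%C with (0 * f x + k * a)%C by ring. exact Hk.
Qed.

Lemma is_derive_Cminus (f g : R -> C) (x : R) (a b : C) :
  is_derive f x a -> is_derive g x b -> is_derive (fun s => f s - g s)%C x (a - b)%C.
Proof. intros Hf Hg. apply (is_derive_minus f g x a b Hf Hg). Qed.

Lemma is_derive_Cplus (f g : R -> C) (x : R) (a b : C) :
  is_derive f x a -> is_derive g x b -> is_derive (fun s => f s + g s)%C x (a + b)%C.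
Proof. intros Hf Hg. apply (is_derive_plus f g x a b Hf Hg). Qed.

Lemma is_derive_Cmult_const (f : R -> C) (k : C) (x : R) (a : C) :
  is_derive f x a -> is_derive (fun s => f s * k)%C x (a * k)%C.
Proof.
  intros H.
  assert (Hk := is_derive_Cmult f (fun _ => k) x a 0 H
                  (@is_derive_const R_AbsRing C_R_NormedModule k x)).
  replace (a * k)%C with (a * k + f x * 0)%C by ring. exact Hk.
Qed.

Lemma exp_le_compat (x y : R) : x <= y -> exp x <= exp y.
Proof. intros [H|H]; [left; apply exp_increasing, H | rewrite H; lra]. Qed.

Definition cexp (k : C) (t : R) : C :=
  (exp (Re k * t) * cos (Im k * t), exp (Re k * t) * sin (Im k * t)).

Lemma cexp_0 (k : C) : cexp k 0 = 1%C.
Proof.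
  unfold cexp. rewrite !Rmult_0_r, exp_0, cos_0, sin_0.
  apply injective_projections; simpl; ring.
Qed.

Lemma Cmod_cexp (k : C) (t : R) : Cmod (cexp k t) = exp (Re k * t).
Proof.
  destruct k as [a b]. unfold Cmod, cexp, Re, Im; simpl.
  assert (H := sin2_cos2 (b * t)). unfold Rsqr in H.
  replace (exp (a * t) * cos (b * t) * (exp (a * t) * cos (b * t) * 1) +
           exp (a * t) * sin (b * t) * (exp (a * t) * sin (b * t) * 1))
    with (Rsqr (exp (a * t))) by (unfold Rsqr; nra).
  apply sqrt_Rsqr. left; apply exp_pos.
Qed.

Lemma is_derive_cexp_rev (k : C) (T z : R) :
  is_derive (fun s => cexp k (T - s)) z (- (k * cexp k (T - z)))%C.
Proof.
  destruct k as [kr ki]. apply is_derive_Re_Im; unfold cexp; simpl;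
    auto_derive; auto; unfold Rminus; ring.
Qed.

Lemma Cmod_increment_le (phi dphi : R -> C) (T B : R) :
  0 <= T ->
  (forall z, 0 <= z <= T -> is_derive phi z (dphi z)) ->
  (forall z, 0 <= z <= T -> Cmod (dphi z) <= B) ->
  Cmod (phi T - phi 0)%C <= B * T.
Proof.
  intros HT Hd HB.
  destruct (Req_dec T 0) as [->|HT0].
  { replace (phi 0 - phi 0)%C with (RtoC 0) by ring. rewrite Cmod_0. lra. }
  set (w := (phi T - phi 0)%C).
  (* Project onto the direction of [w] and apply the real mean value theorem. *)
  destruct (MVT_cor2 (fun s => Re (Cconj w * phi s)%C) (fun s => Re (Cconj w * dphi s)%C) 0 T)
    as [c [Hc Hc0]]; [lra | |].
  { intros c Hc. apply is_derive_Reals, is_derive_Re, is_derive_Cscal, Hd. lra. }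
  assert (Hw2 : Re (Cconj w * phi T)%C - Re (Cconj w * phi 0)%C = Cmod w ^ 2).
  { rewrite Cmod2_alt. unfold w. destruct (phi T), (phi 0); simpl. ring. }
  assert (Hdc : Re (Cconj w * dphi c)%C <= Cmod w * B).
  { eapply Rle_trans; [apply Rle_abs|]. eapply Rle_trans; [apply re_le_Cmod|].
    rewrite Cmod_mult, Cmod_conj.
    apply Rmult_le_compat_l; [apply Cmod_ge_0 | apply HB; lra]. }
  assert (HB0 : 0 <= B) by (eapply Rle_trans; [apply Cmod_ge_0 | apply (HB 0); lra]).
  assert (Hw0 : 0 <= Cmod w) by apply Cmod_ge_0.
  assert (Hsq : Cmod w * Cmod w <= Cmod w * (B * T)) by nra.
  destruct (Rle_lt_dec (Cmod w) (B * T)) as [|Hlt]; [assumption|].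
  assert (Cmod w * (B * T) < Cmod w * Cmod w) by (apply Rmult_lt_compat_l; nra).
  lra.
Qed.

Lemma variation_of_constants_bound (w h : R -> C) (m : C) (T B : R) :
  0 <= T -> (forall z, is_derive w z (m * w z - h z)%C) ->
  (forall z, 0 <= z <= T -> exp (Re m * (T - z)) * Cmod (h z) <= B) ->
  Cmod (w T - cexp m T * w 0)%C <= B * T.
Proof.
  intros HT Hw HB.
  assert (H := Cmod_increment_le (fun z => cexp m (T - z) * w z)%C
                 (fun z => - (cexp m (T - z) * h z))%C T B HT).
  cbv beta in H. rewrite Rminus_diag, Rminus_0_r, cexp_0, Cmult_1_l in H.
  apply H.
  - intros z _.
    assert (Hz := is_derive_Cmult _ _ z _ _ (is_derive_cexp_rev m T z) (Hw z)).
    replace (- (cexp m (T - z) * h z))%C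
      with (- (m * cexp m (T - z)) * w z + cexp m (T - z) * (m * w z - h z))%C by ring.
    exact Hz.
  - intros z Hz. rewrite Cmod_opp, Cmod_mult, Cmod_cexp. apply HB, Hz.
Qed.

Lemma gronwall (h dh : R -> R) (k : R) :
  (forall z, is_derive h z (dh z)) -> (forall z, dh z <= k * h z) ->
  forall z, 0 <= z -> h z <= h 0 * exp (k * z).
Proof.
  intros Hd Hb z Hz.
  destruct (Req_dec z 0) as [->|Hz0].
  { rewrite Rmult_0_r, exp_0. lra. }
  (* [h(s) e^{-ks}] is nonincreasing. *)
  destruct (MVT_cor2 (fun s => h s * exp (- k * s))
              (fun s => (dh s - k * h s) * exp (- k * s)) 0 z) as [c [Hc Hc0]]; [lra| |].
  { intros c _. apply is_derive_Reals.
    apply (is_derive_ext (fun s => h s * exp (- k * s))); [reflexivity|].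
    replace ((dh c - k * h c) * exp (- k * c))
      with (dh c * exp (- k * c) + h c * (- k * exp (- k * c))) by ring.
    apply (Derive.is_derive_mult h (fun s => exp (- k * s)));
      [apply Hd | auto_derive; auto; ring]. }
  assert (Hdc := Hb c). assert (He := exp_pos (- k * c)).
  assert (Hmono : h z * exp (- k * z) <= h 0).
  { rewrite Rmult_0_r, exp_0, Rmult_1_r in Hc.
    assert ((dh c - k * h c) * exp (- k * c) * (z - 0) <= 0).
    { apply Rmult_le_0_r; [apply Rmult_le_0_r|]; lra. }
    lra. }
  replace (h z) with (h z * exp (- k * z) * exp (k * z)).
  - apply Rmult_le_compat_r; [left; apply exp_pos | exact Hmono].
  - rewrite Rmult_assoc, <- exp_plus. replace (- k * z + k * z) with 0 by ring.
    rewrite exp_0; ring.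
Qed.

Lemma is_derive_Cmod_sqr (w : R -> C) (z : R) (l : C) :
  is_derive w z l ->
  is_derive (fun s => Cmod (w s) ^ 2) z (2 * Re (Cconj (w z) * l)%C).
Proof.
  intros H.
  apply (is_derive_ext (fun s => Re (w s) * Re (w s) + Im (w s) * Im (w s))).
  { intros s. rewrite Cmod2_alt. simpl. ring. }
  assert (Hr := Derive.is_derive_mult _ _ z _ _ (is_derive_Re w z l H) (is_derive_Re w z l H)).
  assert (Hi := Derive.is_derive_mult _ _ z _ _ (is_derive_Im w z l H) (is_derive_Im w z l H)).
  assert (Hs := is_derive_plus _ _ z _ _ Hr Hi).
  replace (2 * Re (Cconj (w z) * l)%C) with
    (plus (Re l * Re (w z) + Re (w z) * Re l) (Im l * Im (w z) + Im (w z) * Im l))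
    by (unfold plus, Re, Im; destruct (w z), l; simpl; ring).
  exact Hs.
Qed.

Lemma Cmod_parallelogram (a b : C) :
  Cmod (a + b)%C ^ 2 + Cmod (a - b)%C ^ 2 = 2 * (Cmod a ^ 2 + Cmod b ^ 2).
Proof. rewrite !Cmod2_alt. destruct a, b; simpl. ring. Qed.

Lemma Cmod_reverse_triangle (a b : C) : Cmod a - Cmod b <= Cmod (a - b)%C.
Proof.
  assert (H := Cmod_triangle (a - b)%C b).
  replace (a - b + b)%C with a in H by ring. lra.
Qed.

(** * Nearly diagonal linear systems *)

Definition perturbed_diag (g : R -> C) (m1 m2 : C) (w1 w2 : R -> C) : Prop :=
  forall z, is_derive w1 z (m1 * w1 z - g z * (w1 z - w2 z))%C /\
            is_derive w2 z (m2 * w2 z - g z * (w1 z - w2 z))%C.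

Lemma perturbed_diag_energy_rate (w1 w2 g m1 m2 : C) (eps : R) :
  Re m2 <= Re m1 -> Cmod g <= eps ->
  Re (Cconj w1 * (m1 * w1 - g * (w1 - w2)))%C + Re (Cconj w2 * (m2 * w2 - g * (w1 - w2)))%C
  <= (Re m1 + eps) * (Cmod w1 ^ 2 + Cmod w2 ^ 2).
Proof.
  intros Hm Hg.
  assert (Hsplit : Re (Cconj w1 * (m1 * w1 - g * (w1 - w2)))%C
                   + Re (Cconj w2 * (m2 * w2 - g * (w1 - w2)))%C
                   = Re m1 * Cmod w1 ^ 2 + Re m2 * Cmod w2 ^ 2
                     - Re (Cconj (w1 + w2) * (g * (w1 - w2)))%C).
  { rewrite !Cmod2_alt. destruct w1, w2, g, m1, m2; simpl. ring. }
  (* The coupling is bounded through [2 |w1 + w2| |w1 - w2| <= |w1 + w2|^2 + |w1 - w2|^2]. *)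
  assert (Hcoupling : - Re (Cconj (w1 + w2) * (g * (w1 - w2)))%C
                      <= eps * (Cmod w1 ^ 2 + Cmod w2 ^ 2)).
  { assert (Hre := re_le_Cmod (Cconj (w1 + w2) * (g * (w1 - w2)))%C).
    rewrite !Cmod_mult, Cmod_conj in Hre. apply Rabs_le_between in Hre.
    set (S := Cmod (w1 + w2)%C) in *. set (D := Cmod (w1 - w2)%C) in *.
    assert (HS : 0 <= S) by apply Cmod_ge_0. assert (HD : 0 <= D) by apply Cmod_ge_0.
    assert (Hprod : 2 * (S * D) <= S ^ 2 + D ^ 2)
      by (assert (0 <= (S - D) ^ 2) by apply pow2_ge_0; nra).
    assert (HgSD : S * (Cmod g * D) <= S * (eps * D))
      by (apply Rmult_le_compat_l; [|apply Rmult_le_compat_r]; assumption).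
    assert (Heps : 0 <= eps) by (eapply Rle_trans; [apply Cmod_ge_0 | exact Hg]).
    assert (Hpar := Cmod_parallelogram w1 w2). fold S D in Hpar.
    nra. }
  assert (Hw2 : Re m2 * Cmod w2 ^ 2 <= Re m1 * Cmod w2 ^ 2)
    by (apply Rmult_le_compat_r; [apply pow2_ge_0 | exact Hm]).
  lra.
Qed.

Lemma Cmod_le_of_sqr_le (a : C) (y : R) : Cmod a ^ 2 <= exp y ^ 2 -> Cmod a <= exp y.
Proof.
  intros H. assert (Ha := Cmod_ge_0 a). assert (Hy := exp_pos y).
  destruct (Rle_lt_dec (Cmod a) (exp y)) as [|Hlt]; [assumption|].
  assert (exp y * exp y < Cmod a * Cmod a) by (apply Rmult_le_0_lt_compat; lra).
  simpl in H. lra.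
Qed.

Lemma perturbed_diag_wronskian (g : R -> C) (m1 m2 : C) (X1 X2 Y1 Y2 : R -> C) (T : R) :
  perturbed_diag g m1 m2 X1 X2 -> perturbed_diag g m1 m2 Y1 Y2 -> 0 <= T ->
  (X1 T * Y2 T - Y1 T * X2 T = cexp (m1 + m2) T * (X1 0 * Y2 0 - Y1 0 * X2 0))%C.
Proof.
  intros HX HY HT.
  (* Liouville: the coupling cancels in the derivative of the Wronskian. *)
  assert (Hw : forall z, is_derive (fun s => X1 s * Y2 s - Y1 s * X2 s)%C z
     ((m1 + m2) * (X1 z * Y2 z - Y1 z * X2 z) - 0)%C).
  { intros z. destruct (HX z) as [HX1 HX2]. destruct (HY z) as [HY1 HY2].
    assert (H := is_derive_Cminus _ _ z _ _ (is_derive_Cmult _ _ z _ _ HX1 HY2)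
                                           (is_derive_Cmult _ _ z _ _ HY1 HX2)).
    match type of H with is_derive _ _ ?l =>
      replace ((m1 + m2) * (X1 z * Y2 z - Y1 z * X2 z) - 0)%C with l
        by (match goal with |- ?a = ?b => change (@eq C a b) end; ring) end.
    exact H. }
  assert (H := variation_of_constants_bound _ (fun _ => 0%C) (m1 + m2) T 0 HT Hw).
  rewrite Rmult_0_l in H.
  apply Ceq_minus, Cmod_eq_0, Rle_antisym; [|apply Cmod_ge_0].
  apply H. intros z _. rewrite Cmod_0, Rmult_0_r. lra.
Qed.

Section PerturbedDiagonal.

Variables (g : R -> C) (m1 m2 : C) (eps : R).
Hypothesis Hm : Re m2 <= Re m1.
Hypothesis Hg : forall z, Cmod (g z) <= eps.

Lemma eps_nonneg : 0 <= eps.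
Proof. eapply Rle_trans; [apply Cmod_ge_0 | apply (Hg 0)]. Qed.

Lemma perturbed_diag_energy (w1 w2 : R -> C) :
  perturbed_diag g m1 m2 w1 w2 -> forall z, 0 <= z ->
  Cmod (w1 z) ^ 2 + Cmod (w2 z) ^ 2
  <= (Cmod (w1 0) ^ 2 + Cmod (w2 0) ^ 2) * exp (2 * (Re m1 + eps) * z).
Proof.
  intros Hw.
  apply (gronwall (fun s => Cmod (w1 s) ^ 2 + Cmod (w2 s) ^ 2)
    (fun s => 2 * Re (Cconj (w1 s) * (m1 * w1 s - g s * (w1 s - w2 s)))%C +
              2 * Re (Cconj (w2 s) * (m2 * w2 s - g s * (w1 s - w2 s)))%C)).
  - intros z. destruct (Hw z) as [H1 H2].
    apply (is_derive_plus (fun s => Cmod (w1 s) ^ 2) (fun s => Cmod (w2 s) ^ 2));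
      apply is_derive_Cmod_sqr; assumption.
  - intros z. assert (H := perturbed_diag_energy_rate (w1 z) (w2 z) (g z) m1 m2 eps Hm (Hg z)).
    lra.
Qed.

Lemma perturbed_diag_unit_bound (w1 w2 : R -> C) :
  perturbed_diag g m1 m2 w1 w2 -> Cmod (w1 0) ^ 2 + Cmod (w2 0) ^ 2 = 1 ->
  forall z, 0 <= z ->
  Cmod (w1 z) <= exp ((Re m1 + eps) * z) /\ Cmod (w2 z) <= exp ((Re m1 + eps) * z).
Proof.
  intros Hw H0 z Hz.
  assert (En := perturbed_diag_energy w1 w2 Hw z Hz).
  rewrite H0, Rmult_1_l in En.
  replace (2 * (Re m1 + eps) * z) with ((Re m1 + eps) * z + (Re m1 + eps) * z) in En by ring.
  rewrite exp_plus in En.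
  assert (0 <= Cmod (w1 z) ^ 2) by apply pow2_ge_0.
  assert (0 <= Cmod (w2 z) ^ 2) by apply pow2_ge_0.
  split; apply Cmod_le_of_sqr_le; simpl; lra.
Qed.

Lemma perturbed_diag_first_column (X1 X2 : R -> C) (T : R) :
  perturbed_diag g m1 m2 X1 X2 -> X1 0 = 1%C -> X2 0 = 0%C -> 0 <= T ->
  Cmod (X1 T - cexp m1 T)%C <= 2 * eps * T * exp (eps * T) * exp (Re m1 * T) /\
  Cmod (X2 T) <= 2 * eps * T * exp (eps * T) * exp (Re m1 * T).
Proof.
  intros HX I1 I2 HT.
  assert (Hdiff : forall z, 0 <= z -> Cmod (X1 z - X2 z)%C <= 2 * exp ((Re m1 + eps) * z)).
  { intros z Hz.
    destruct (perturbed_diag_unit_bound X1 X2 HX ltac:(rewrite I1, I2, Cmod_1, Cmod_0; ring) z Hz)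
      as [H1 H2].
    assert (Htri := Cmod_triangle (X1 z) (- X2 z)%C). rewrite Cmod_opp in Htri.
    change (X1 z - X2 z)%C with (X1 z + - X2 z)%C. lra. }
  (* Duhamel's formula, with the coupling as forcing term. *)
  assert (Hforce : forall m, Re m <= Re m1 -> forall z, 0 <= z <= T ->
            exp (Re m * (T - z)) * Cmod (g z * (X1 z - X2 z))%C
            <= 2 * eps * exp (eps * T) * exp (Re m1 * T)).
  { intros m Hmm z Hz. rewrite Cmod_mult.
    assert (Heps := eps_nonneg).
    assert (He : exp (Re m * (T - z)) <= exp (Re m1 * (T - z)))
      by (apply exp_le_compat, Rmult_le_compat_r; lra).
    assert (Hez : exp (eps * z) <= exp (eps * T))
      by (apply exp_le_compat, Rmult_le_compat_l; lra).
    assert (Hid : exp (Re m1 * (T - z)) * (eps * (2 * exp ((Re m1 + eps) * z)))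
                  = 2 * eps * exp (eps * z) * exp (Re m1 * T)).
    { replace (Re m1 * T) with (Re m1 * (T - z) + Re m1 * z) by ring.
      replace ((Re m1 + eps) * z) with (Re m1 * z + eps * z) by ring.
      rewrite !exp_plus. ring. }
    assert (0 < exp (Re m1 * T)) by apply exp_pos.
    apply Rle_trans with (exp (Re m1 * (T - z)) * (eps * (2 * exp ((Re m1 + eps) * z)))).
    - apply Rmult_le_compat; auto using Rmult_le_pos, Cmod_ge_0, Rlt_le, exp_pos.
      apply Rmult_le_compat; auto using Cmod_ge_0. apply Hdiff. lra.
    - rewrite Hid. apply Rmult_le_compat_r; [lra|]. nra. }
  split.
  - assert (H := variation_of_constants_bound X1 (fun z => g z * (X1 z - X2 z))%C m1 T _ HT
                   (fun z => proj1 (HX z)) (Hforce m1 (Rle_refl _))).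
    rewrite I1, Cmult_1_r in H. lra.
  - assert (H := variation_of_constants_bound X2 (fun z => g z * (X1 z - X2 z))%C m2 T _ HT
                   (fun z => proj2 (HX z)) (Hforce m2 Hm)).
    rewrite I2 in H. replace (X2 T - cexp m2 T * 0)%C with (X2 T) in H by ring. lra.
Qed.

Lemma perturbed_diag_entries (X1 X2 Y1 Y2 : R -> C) (T : R) :
  perturbed_diag g m1 m2 X1 X2 -> perturbed_diag g m1 m2 Y1 Y2 ->
  X1 0 = 1%C -> X2 0 = 0%C -> Y1 0 = 0%C -> Y2 0 = 1%C ->
  0 <= T -> eps * T <= 1 / 200 ->
  Cmod (X1 T - cexp m1 T)%C <= 3 / 100 * exp (Re m1 * T) /\
  Cmod (X2 T) <= 3 / 100 * exp (Re m1 * T) /\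
  Cmod (Y1 T) <= 3 * exp (Re m1 * T).
Proof.
  intros HX HY IX1 IX2 IY1 IY2 HT HepsT.
  assert (HE := exp_pos (Re m1 * T)). assert (Heps := eps_nonneg).
  assert (Hk : exp (eps * T) <= 3)
    by (eapply Rle_trans; [apply exp_le_compat | apply exp_le_3]; lra).
  assert (Hd0 : 2 * eps * T * exp (eps * T) <= 3 / 100)
    by (assert (0 <= eps * T) by nra; assert (0 < exp (eps * T)) by apply exp_pos; nra).
  destruct (perturbed_diag_first_column X1 X2 T HX IX1 IX2 HT) as [B1 B2].
  destruct (perturbed_diag_unit_bound Y1 Y2 HY ltac:(rewrite IY1, IY2, Cmod_1, Cmod_0; ring)
              T HT) as [B3 _].
  replace ((Re m1 + eps) * T) with (eps * T + Re m1 * T) in B3 by ring.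
  rewrite exp_plus in B3.
  repeat split; nra.
Qed.

Lemma perturbed_diag_trace_det (X1 X2 Y1 Y2 : R -> C) (T : R) :
  perturbed_diag g m1 m2 X1 X2 -> perturbed_diag g m1 m2 Y1 Y2 ->
  X1 0 = 1%C -> X2 0 = 0%C -> Y1 0 = 0%C -> Y2 0 = 1%C ->
  0 <= T -> eps * T <= 1 / 200 -> 64 <= (Re m1 - Re m2) * T ->
  Cmod (X1 T + Y2 T - cexp m1 T)%C <= exp (Re m1 * T) / 4 /\
  Cmod (X1 T * Y2 T - Y1 T * X2 T)%C = exp (Re m1 * T + Re m2 * T).
Proof.
  intros HX HY IX1 IX2 IY1 IY2 HT HepsT Hgap.
  assert (Hdet : Cmod (X1 T * Y2 T - Y1 T * X2 T)%C = exp (Re m1 * T + Re m2 * T)).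
  { rewrite (perturbed_diag_wronskian g m1 m2 X1 X2 Y1 Y2 T HX HY HT), IX1, IX2, IY1, IY2.
    replace (RtoC 1 * RtoC 1 - RtoC 0 * RtoC 0)%C with (RtoC 1) by ring.
    rewrite Cmult_1_r, Cmod_cexp. f_equal. unfold Re. simpl. ring. }
  split; [|exact Hdet].
  destruct (perturbed_diag_entries X1 X2 Y1 Y2 T HX HY IX1 IX2 IY1 IY2 HT HepsT)
    as (HB1 & HB2 & HB3).
  set (E := exp (Re m1 * T)) in *. assert (HE : 0 < E) by apply exp_pos.
  (* The off-diagonal product is negligible against [E^2] because of the spectral gap. *)
  assert (HW : Cmod (X1 T * Y2 T - Y1 T * X2 T)%C <= E * E / 64).
  { rewrite Hdet.
    assert (Hsplit : exp (Re m1 * T + Re m2 * T) * exp ((Re m1 - Re m2) * T) = E * E)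
      by (unfold E; rewrite <- !exp_plus; f_equal; ring).
    assert (H65 := exp_ineq1_le ((Re m1 - Re m2) * T)).
    assert (0 < exp (Re m1 * T + Re m2 * T)) by apply exp_pos.
    nra. }
  assert (HX1 : 97 / 100 * E <= Cmod (X1 T)).
  { assert (H := Cmod_reverse_triangle (cexp m1 T) (X1 T)).
    replace (cexp m1 T - X1 T)%C with (- (X1 T - cexp m1 T))%C in H by ring.
    rewrite Cmod_opp, Cmod_cexp in H. fold E in H. lra. }
  assert (HY2 : Cmod (Y2 T) <= E / 8).
  { assert (H := Cmod_triangle (X1 T * Y2 T - Y1 T * X2 T)%C (Y1 T * X2 T)%C).
    replace (X1 T * Y2 T - Y1 T * X2 T + Y1 T * X2 T)%C with (X1 T * Y2 T)%C in H by ring.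
    rewrite !Cmod_mult in H.
    assert (Hy1 := Cmod_ge_0 (Y1 T)). assert (Hx2 := Cmod_ge_0 (X2 T)).
    assert (Hy2 := Cmod_ge_0 (Y2 T)).
    assert (Cmod (Y1 T) * Cmod (X2 T) <= 3 * E * (3 / 100 * E))
      by (apply Rmult_le_compat; assumption).
    assert (97 / 100 * E * Cmod (Y2 T) <= Cmod (X1 T) * Cmod (Y2 T))
      by (apply Rmult_le_compat_r; assumption).
    nra. }
  replace (X1 T + Y2 T - cexp m1 T)%C with ((X1 T - cexp m1 T) + Y2 T)%C by ring.
  eapply Rle_trans; [apply Cmod_triangle|]. lra.
Qed.

End PerturbedDiagonal.

(** * Roots of the monodromy matrix *)

Lemma ln2_lt_1 : ln 2 < 1.
Proof.
  rewrite <- (ln_exp 1). apply ln_increasing; [lra|].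
  assert (H := exp_ineq1 1). lra.
Qed.

Lemma Rabs_ln_sub_lt_1 (x a : R) : exp a / 2 <= x <= 2 * exp a -> Rabs (ln x - a) < 1.
Proof.
  intros [Hlo Hhi]. assert (HE := exp_pos a). assert (L := ln2_lt_1).
  assert (Hl : ln (exp a * / 2) <= ln x) by (apply ln_le; lra).
  assert (Hh : ln x <= ln (2 * exp a)) by (apply ln_le; lra).
  rewrite ln_mult, ln_Rinv, ln_exp in Hl by lra.
  rewrite ln_mult, ln_exp in Hh by lra.
  assert (ln 2 > 0) by (rewrite <- ln_1; apply ln_increasing; lra).
  apply Rabs_def1; lra.
Qed.

Lemma dominant_root_logs (r1 r2 e : C) (a b : R) :
  64 <= a - b -> Cmod e = exp a -> Cmod (r1 + r2 - e)%C <= exp a / 4 ->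
  Cmod (r1 * r2)%C = exp (a + b) -> Cmod r2 <= Cmod r1 ->
  Rabs (ln (Cmod r1) - a) < 1 /\ Rabs (ln (Cmod r2) - b) < 1.
Proof.
  intros Hgap He Hsum Hprod Hord. rewrite Cmod_mult in Hprod.
  set (E := exp a) in *. assert (HE : 0 < E) by apply exp_pos.
  assert (Hab : 0 < exp (a + b)) by apply exp_pos.
  assert (Hsmall : exp (a + b) <= E * E / 64).
  { assert (Hsplit : exp (a + b) * exp (a - b) = E * E)
      by (unfold E; rewrite <- !exp_plus; f_equal; ring).
    assert (H65 := exp_ineq1_le (a - b)). nra. }
  assert (H2 := Cmod_ge_0 r2).
  assert (Hr2 : Cmod r2 <= E / 8) by nra.
  assert (Hlo := Cmod_reverse_triangle e (r1 + r2)%C).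
  replace (e - (r1 + r2))%C with (- (r1 + r2 - e))%C in Hlo by ring.
  rewrite Cmod_opp in Hlo.
  assert (Hhi := Cmod_triangle (r1 + r2 - e)%C e).
  replace (r1 + r2 - e + e)%C with (r1 + r2)%C in Hhi by ring.
  assert (Hr1lo := Cmod_triangle r1 r2).
  assert (Hr1hi := Cmod_triangle (r1 + r2)%C (- r2)%C).
  replace (r1 + r2 + - r2)%C with r1 in Hr1hi by ring. rewrite Cmod_opp in Hr1hi.
  assert (Hr1 : E / 2 <= Cmod r1 <= 2 * E) by lra.
  split; [now apply Rabs_ln_sub_lt_1|].
  assert (Hr2pos : 0 < Cmod r2) by nra.
  assert (Hln : ln (Cmod r1) + ln (Cmod r2) = a + b)
    by (rewrite <- ln_mult, Hprod, ln_exp; lra).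
  replace (ln (Cmod r2) - b) with (- (ln (Cmod r1) - a)) by lra.
  rewrite Rabs_Ropp. now apply Rabs_ln_sub_lt_1.
Qed.

Lemma quadratic_root_logs (r1 r2 e : C) (a b : R) :
  64 <= a - b -> Cmod e = exp a -> Cmod (r1 + r2 - e)%C <= exp a / 4 ->
  Cmod (r1 * r2)%C = exp (a + b) ->
  (Rabs (ln (Cmod r1) - a) < 1 /\ Rabs (ln (Cmod r2) - b) < 1) \/
  (Rabs (ln (Cmod r2) - a) < 1 /\ Rabs (ln (Cmod r1) - b) < 1).
Proof.
  intros Hgap He Hsum Hprod.
  destruct (Rle_dec (Cmod r2) (Cmod r1)) as [Hord|Hord].
  - left. now apply (dominant_root_logs r1 r2 e).
  - right. apply (dominant_root_logs r2 r1 e); try assumption; try lra.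
    + replace (r2 + r1 - e)%C with (r1 + r2 - e)%C by ring. exact Hsum.
    + rewrite Cmult_comm. exact Hprod.
Qed.

Lemma sgn_eq_of_mult_pos (x y : R) : 0 < x * y -> sgn x = sgn y.
Proof.
  intros H. unfold sgn.
  destruct (Rlt_dec 0 x), (Rlt_dec 0 y), (Rlt_dec x 0), (Rlt_dec y 0); nra.
Qed.

Lemma mult_pos_of_Rabs_sub_lt_1 (x a : R) : Rabs (x - a) < 1 -> 1 < Rabs a -> 0 < x * a.
Proof.
  intros Hx Ha. apply Rabs_def2 in Hx.
  destruct (Rle_dec 0 a) as [Hpos|Hneg].
  - rewrite Rabs_pos_eq in Ha by lra. nra.
  - rewrite Rabs_left in Ha by lra. nra.
Qed.

Lemma sgn_mult_near (x y a b : R) :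
  Rabs (x - a) < 1 -> Rabs (y - b) < 1 -> 1 < Rabs a -> 1 < Rabs b ->
  sgn (x * y) = sgn (a * b).
Proof.
  intros Hx Hy Ha Hb. apply sgn_eq_of_mult_pos.
  assert (Hxa := mult_pos_of_Rabs_sub_lt_1 x a Hx Ha).
  assert (Hyb := mult_pos_of_Rabs_sub_lt_1 y b Hy Hb).
  replace (x * y * (a * b)) with ((x * a) * (y * b)) by ring.
  now apply Rmult_lt_0_compat.
Qed.

(** * The linearization of the wave equation *)

Lemma eigenvalues2_trace_det (M : nat -> nat -> C) (r1 r2 : C) :
  eigenvalues2 M r1 r2 ->
  (r1 + r2 = M 0%nat 0%nat + M 1%nat 1%nat)%C /\
  (r1 * r2 = M 0%nat 0%nat * M 1%nat 1%nat - M 0%nat 1%nat * M 1%nat 0%nat)%C.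
Proof.
  intros H.
  assert (Hdet : (r1 * r2 = M 0%nat 0%nat * M 1%nat 1%nat - M 0%nat 1%nat * M 1%nat 0%nat)%C).
  { transitivity ((RtoC 0 - r1) * (RtoC 0 - r2))%C; [ring|]. rewrite H. ring. }
  split; [|exact Hdet].
  transitivity (RtoC 1 + r1 * r2 - (RtoC 1 - r1) * (RtoC 1 - r2))%C; [ring|].
  rewrite H, Hdet. ring.
Qed.

Definition mx_apply (F : R -> nat -> nat -> C) (a b : C) (i : nat) (s : R) : C :=
  (F s i 0%nat * a + F s i 1%nat * b)%C.

Lemma fundamental_matrix_apply (c : R) (f : R -> R) (lam : C) (F : R -> nat -> nat -> C)
    (a b : C) (i : nat) (z : R) :
  fundamental_matrix c f lam F -> (i < 2)%nat ->
  is_derive (mx_apply F a b i) z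
    (Acoef c f lam z i 0 * mx_apply F a b 0 z + Acoef c f lam z i 1 * mx_apply F a b 1 z)%C.
Proof.
  intros [_ HF] Hi.
  assert (H := is_derive_Cplus _ _ z _ _
                 (is_derive_Cmult_const _ a z _ (HF z i 0%nat Hi ltac:(lia)))
                 (is_derive_Cmult_const _ b z _ (HF z i 1%nat Hi ltac:(lia)))).
  unfold mx_apply.
  match type of H with is_derive _ _ ?l => replace (_ + _)%C with l by ring end.
  exact H.
Qed.

(* With [p'' = (m1 + m2) p' - (m1 m2 + g (m1 - m2)) p], the combinations [p' - m2 p] and
   [p' - m1 p] would be the exponentials [e^{m1 z}], [e^{m2 z}] if [g] vanished. *)
Lemma second_order_diagonalize (p q g : R -> C) (m1 m2 : C) :
  (forall z, is_derive p z (q z)) ->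
  (forall z, is_derive q z ((- (m1 * m2) - g z * (m1 - m2)) * p z + (m1 + m2) * q z)%C) ->
  perturbed_diag g m1 m2 (fun s => q s - m2 * p s)%C (fun s => q s - m1 * p s)%C.
Proof.
  intros Hp Hq z. split.
  - assert (H := is_derive_Cminus _ _ z _ _ (Hq z) (is_derive_Cscal m2 p z _ (Hp z))).
    match type of H with is_derive _ _ ?l => replace (_ - _)%C with l by ring end.
    exact H.
  - assert (H := is_derive_Cminus _ _ z _ _ (Hq z) (is_derive_Cscal m1 p z _ (Hp z))).
    match type of H with is_derive _ _ ?l => replace (_ - _)%C with l by ring end.
    exact H.
Qed.

Lemma Cmod_cos_div_le (k x : R) (d : C) :
  0 < Re d -> Cmod (RtoC (k * cos x) / d)%C <= Rabs k / Re d.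
Proof.
  intros Hd.
  assert (Hd0 : d <> RtoC 0) by (intros E; rewrite E in Hd; simpl in Hd; lra).
  rewrite Cmod_div, Cmod_R, Rabs_mult by exact Hd0.
  assert (Hcos : Rabs (cos x) <= 1) by (apply Rabs_le, COS_bound).
  assert (Hdd : Re d <= Cmod d) by (eapply Rle_trans; [apply Rle_abs | apply re_le_Cmod]).
  unfold Rdiv. apply Rmult_le_compat.
  - apply Rmult_le_pos; apply Rabs_pos.
  - left. apply Rinv_0_lt_compat. lra.
  - rewrite <- (Rmult_1_r (Rabs k)) at 2.
    apply Rmult_le_compat_l; [apply Rabs_pos | exact Hcos].
  - apply Rinv_le_contravar; lra.
Qed.

Definition coupling (c : R) (f : R -> R) (m1 m2 : C) (z : R) : C :=
  (RtoC (gam c * cos (f z)) / (m1 - m2))%C.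

Lemma fundamental_matrix_perturbed_diag (c : R) (f : R -> R) (lam : C)
    (F : R -> nat -> nat -> C) (m1 m2 a b : C) :
  fundamental_matrix c f lam F -> (m1 - m2)%C <> RtoC 0 ->
  (m1 + m2 = RtoC (2 * c * gam c) * lam)%C ->
  (m1 * m2 = RtoC (gam c) * (lam * lam))%C ->
  perturbed_diag (coupling c f m1 m2) m1 m2
    (fun s => mx_apply F a b 1 s - m2 * mx_apply F a b 0 s)%C
    (fun s => mx_apply F a b 1 s - m1 * mx_apply F a b 0 s)%C.
Proof.
  intros HF Hd Hsum Hprod. apply second_order_diagonalize; intros z.
  - assert (H := fundamental_matrix_apply c f lam F a b 0 z HF ltac:(lia)).
    simpl in H.
    replace (mx_apply F a b 1 z) with (0 * mx_apply F a b 0 z + 1 * mx_apply F a b 1 z)%C by ring.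
    exact H.
  - assert (H := fundamental_matrix_apply c f lam F a b 1 z HF ltac:(lia)).
    replace (- (m1 * m2) - coupling c f m1 m2 z * (m1 - m2))%C with (Acoef c f lam z 1 0).
    + rewrite Hsum. exact H.
    + simpl. unfold coupling. rewrite Hprod, RtoC_mult. field. exact Hd.
Qed.

Lemma fundamental_matrix_diagonal_form (c : R) (f : R -> R) (lam : C)
    (F : R -> nat -> nat -> C) (m1 m2 : C) (t : R) :
  fundamental_matrix c f lam F -> Re m2 < Re m1 ->
  (m1 + m2 = RtoC (2 * c * gam c) * lam)%C ->
  (m1 * m2 = RtoC (gam c) * (lam * lam))%C ->
  exists g X1 X2 Y1 Y2 : R -> C,
    (forall z, Cmod (g z) <= Rabs (gam c) / (Re m1 - Re m2)) /\
    perturbed_diag g m1 m2 X1 X2 /\ perturbed_diag g m1 m2 Y1 Y2 /\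
    X1 0 = RtoC 1 /\ X2 0 = RtoC 0 /\ Y1 0 = RtoC 0 /\ Y2 0 = RtoC 1 /\
    (X1 t + Y2 t = F t 0%nat 0%nat + F t 1%nat 1%nat)%C /\
    (X1 t * Y2 t - Y1 t * X2 t
     = F t 0%nat 0%nat * F t 1%nat 1%nat - F t 0%nat 1%nat * F t 1%nat 0%nat)%C.
Proof.
  intros HF Hm Hsum Hprod.
  assert (HRed : Re (m1 - m2)%C = Re m1 - Re m2) by reflexivity.
  assert (Hd : (m1 - m2)%C <> RtoC 0)
    by (intros E; rewrite E in HRed; simpl in HRed; lra).
  (* [(1, m1) / (m1 - m2)] and [(-1, -m2) / (m1 - m2)] are the initial data sent to the
     unit vectors. *)
  set (aX := (RtoC 1 / (m1 - m2))%C). set (bX := (m1 / (m1 - m2))%C).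
  set (aY := (- RtoC 1 / (m1 - m2))%C). set (bY := (- m2 / (m1 - m2))%C).
  exists (coupling c f m1 m2),
    (fun s => mx_apply F aX bX 1 s - m2 * mx_apply F aX bX 0 s)%C,
    (fun s => mx_apply F aX bX 1 s - m1 * mx_apply F aX bX 0 s)%C,
    (fun s => mx_apply F aY bY 1 s - m2 * mx_apply F aY bY 0 s)%C,
    (fun s => mx_apply F aY bY 1 s - m1 * mx_apply F aY bY 0 s)%C.
  assert (HF0 := proj1 HF).
  assert (HF00 : F 0 0%nat 0%nat = RtoC 1) by (apply HF0; lia).
  assert (HF01 : F 0 0%nat 1%nat = RtoC 0) by (apply HF0; lia).
  assert (HF10 : F 0 1%nat 0%nat = RtoC 0) by (apply HF0; lia).
  assert (HF11 : F 0 1%nat 1%nat = RtoC 1) by (apply HF0; lia).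
  assert (Hg : forall z, Cmod (coupling c f m1 m2 z) <= Rabs (gam c) / (Re m1 - Re m2))
    by (intros z; rewrite <- HRed; apply Cmod_cos_div_le; lra).
  split; [exact Hg|].
  split; [now apply (fundamental_matrix_perturbed_diag c f lam)|].
  split; [now apply (fundamental_matrix_perturbed_diag c f lam)|].
  repeat split; unfold mx_apply, aX, bX, aY, bY;
    rewrite ?HF00, ?HF01, ?HF10, ?HF11; field; exact Hd.
Qed.

Definition large_Re_threshold (c T : R) : R :=
  100 * T + 32 / (Rabs (gam c) * T)
  + / (Rabs (gam c) * T * Rmin (Rabs (c + 1)) (Rabs (c - 1))).

Lemma gam_mul (c : R) : c ^ 2 <> 1 -> gam c * (c ^ 2 - 1) = 1.
Proof. intros Hc. unfold gam. field. lra. Qed.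

Lemma large_Re_threshold_spec (c T sigma : R) :
  c ^ 2 <> 1 -> 0 < T -> large_Re_threshold c T < Rabs sigma ->
  100 * T < Rabs sigma /\ 32 < Rabs (gam c) * T * Rabs sigma /\
  1 < Rabs (gam c) * T * Rmin (Rabs (c + 1)) (Rabs (c - 1)) * Rabs sigma.
Proof.
  intros Hc HT Hs. unfold large_Re_threshold in Hs.
  assert (Hg : 0 < Rabs (gam c)).
  { apply Rabs_pos_lt. intros E. assert (H := gam_mul c Hc). rewrite E in H. lra. }
  assert (Hmin : 0 < Rmin (Rabs (c + 1)) (Rabs (c - 1))).
  { apply Rmin_glb_lt; apply Rabs_pos_lt; intros E; apply Hc;
      [replace c with (-1) by lra | replace c with 1 by lra]; ring. }
  set (a := Rabs (gam c) * T) in *. set (b := a * Rmin (Rabs (c + 1)) (Rabs (c - 1))) in *.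
  assert (Ha : 0 < a) by (unfold a; nra). assert (Hb : 0 < b) by (unfold b; nra).
  assert (H32 : 0 < 32 / a) by (apply Rdiv_lt_0_compat; lra).
  assert (Hinv : 0 < / b) by (apply Rinv_0_lt_compat; lra).
  repeat split; [nra | |].
  - replace 32 with (a * (32 / a)) by (field; lra). apply Rmult_lt_compat_l; lra.
  - replace 1 with (b * / b) by (field; lra). apply Rmult_lt_compat_l; lra.
Qed.

Lemma exists_unit_sign (x : R) : exists s, (s = 1 \/ s = -1) /\ s * x = Rabs x.
Proof.
  destruct (Rle_dec 0 x).
  - exists 1. split; [now left | rewrite Rabs_pos_eq; lra].
  - exists (-1). split; [now right | rewrite Rabs_left; lra].
Qed.

Lemma Rmin_le_Rabs_add_sign (c s : R) :
  s = 1 \/ s = -1 ->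
  Rmin (Rabs (c + 1)) (Rabs (c - 1)) <= Rabs (c + s) /\
  Rmin (Rabs (c + 1)) (Rabs (c - 1)) <= Rabs (c - s).
Proof.
  intros [-> | ->].
  - split; [apply Rmin_l | apply Rmin_r].
  - replace (c + -1) with (c - 1) by ring. replace (c - -1) with (c + 1) by ring.
    split; [apply Rmin_r | apply Rmin_l].
Qed.

Lemma gam_mul_roots (c s : R) :
  c ^ 2 <> 1 -> s * s = 1 -> gam c * (c + s) * (gam c * (c - s)) = gam c.
Proof.
  intros Hc Hs.
  replace (gam c * (c + s) * (gam c * (c - s))) with (gam c * (gam c * (c ^ 2 - s * s))) by ring.
  rewrite Hs, gam_mul by exact Hc. ring.
Qed.

Lemma char_roots_sum_prod (c s : R) (lam : C) :
  c ^ 2 <> 1 -> s * s = 1 ->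
  (lam * RtoC (gam c * (c + s)) + lam * RtoC (gam c * (c - s)) = RtoC (2 * c * gam c) * lam)%C /\
  (lam * RtoC (gam c * (c + s)) * (lam * RtoC (gam c * (c - s)))
   = RtoC (gam c) * (lam * lam))%C.
Proof.
  intros Hc Hs. split.
  - apply injective_projections; simpl; ring.
  - rewrite <- (gam_mul_roots c s Hc Hs) at 3.
    apply injective_projections; simpl; ring.
Qed.

Lemma char_roots_large_Re (c T : R) (lam : C) :
  c ^ 2 <> 1 -> 0 < T -> large_Re_threshold c T < Rabs (Re lam) ->
  exists m1 m2 : C,
    (m1 + m2 = RtoC (2 * c * gam c) * lam)%C /\
    (m1 * m2 = RtoC (gam c) * (lam * lam))%C /\
    Rabs (gam c) / (Re m1 - Re m2) * T <= 1 / 200 /\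
    64 <= (Re m1 - Re m2) * T /\
    1 < Rabs (Re m1 * T) /\ 1 < Rabs (Re m2 * T) /\
    sgn (Re m1 * T * (Re m2 * T)) = sgn (gam c).
Proof.
  intros Hc HT Hlam.
  destruct (large_Re_threshold_spec c T (Re lam) Hc HT Hlam) as (H100 & H32 & H1).
  set (gm := gam c) in *. set (sigma := Re lam) in *.
  assert (Hgm := gam_mul c Hc). fold gm in Hgm.
  destruct (exists_unit_sign (gm * sigma)) as (s & Hs & Hsgs).
  rewrite Rabs_mult in Hsgs.
  assert (Hss : s * s = 1) by (destruct Hs; subst; ring).
  assert (Hcs := Rmin_le_Rabs_add_sign c s Hs).
  exists (lam * RtoC (gm * (c + s)))%C, (lam * RtoC (gm * (c - s)))%C.
  rewrite !re_scal_r. fold sigma.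
  assert (Hgap : sigma * (gm * (c + s)) - sigma * (gm * (c - s)) = 2 * (Rabs gm * Rabs sigma))
    by (rewrite <- Hsgs; ring).
  rewrite Hgap.
  assert (Hpos : 0 < Rabs gm * Rabs sigma) by (assert (0 <= Rabs gm) by apply Rabs_pos; nra).
  destruct (char_roots_sum_prod c s lam Hc Hss) as [Hsum Hprod].
  assert (Hk := gam_mul_roots c s Hc Hss). fold gm in Hsum, Hprod, Hk.
  repeat split; [exact Hsum | exact Hprod | | | | |].
  - assert (Hu : Rabs gm / (2 * (Rabs gm * Rabs sigma)) * T * (2 * Rabs sigma) = T)
      by (field; split; apply Rgt_not_eq; nra).
    nra.
  - nra.
  - rewrite !Rabs_mult, (Rabs_pos_eq T) by lra.
    assert (0 <= Rabs gm) by apply Rabs_pos. destruct Hcs. nra.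
  - rewrite !Rabs_mult, (Rabs_pos_eq T) by lra.
    assert (0 <= Rabs gm) by apply Rabs_pos. destruct Hcs. nra.
  - apply sgn_eq_of_mult_pos.
    replace (sigma * (gm * (c + s)) * T * (sigma * (gm * (c - s)) * T) * gm)
      with ((sigma * T) ^ 2 * (gm * (c + s) * (gm * (c - s))) * gm) by ring.
    rewrite Hk.
    assert (sigma * T <> 0)
      by (apply Rmult_integral_contrapositive; split; [intros E; rewrite E, Rabs_R0 in Hpos|]; nra).
    assert (gm <> 0) by (intros E; rewrite E, Rabs_R0 in Hpos; lra).
    assert (0 < (sigma * T) ^ 2) by (apply pow2_gt_0; assumption).
    nra.
Qed.

Theorem lemma3p14 :
  forall (c : R) (f : R -> R) (T : R),
    c ^ 2 <> 1 ->
    periodic_tw c f T ->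
    exists M : R, forall lam : C,
      M < Rabs (Re lam) ->
      forall F : R -> nat -> nat -> C,
        fundamental_matrix c f lam F ->
        forall rp rm : C,
          eigenvalues2 (F T) rp rm ->
          sgn (Gp rp rm) = sgn (gam c).
Proof.
  intros c f T Hc [_ [HT _]].
  exists (large_Re_threshold c T).
  intros lam Hlam F HF rp rm Heig.
  destruct (char_roots_large_Re c T lam Hc HT Hlam)
    as (m1 & m2 & Hsum & Hprod & HepsT & Hgap & Ha & Hb & Hsgn).
  assert (Hm : Re m2 < Re m1) by nra.
  destruct (fundamental_matrix_diagonal_form c f lam F m1 m2 T HF Hm Hsum Hprod)
    as (g & X1 & X2 & Y1 & Y2 & Hg & HX & HY & IX1 & IX2 & IY1 & IY2 & Htr & Hdet).
  destruct (eigenvalues2_trace_det _ _ _ Heig) as [Hrtr Hrdet].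
  destruct (perturbed_diag_trace_det g m1 m2 _ (Rlt_le _ _ Hm) Hg X1 X2 Y1 Y2 T
              HX HY IX1 IX2 IY1 IY2 (Rlt_le _ _ HT) HepsT Hgap) as [Hmtr Hmdet].
  rewrite Htr, <- Hrtr in Hmtr. rewrite Hdet, <- Hrdet in Hmdet.
  rewrite <- Hsgn. unfold Gp.
  destruct (quadratic_root_logs rp rm (cexp m1 T) (Re m1 * T) (Re m2 * T))
    as [[H1 H2] | [H1 H2]]; try assumption.
  - lra.
  - apply Cmod_cexp.
  - now apply sgn_mult_near.
  - rewrite Rmult_comm. now apply sgn_mult_near.
Qed.
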